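(* Let $l$ be a positive integer, let $G$ be an arbitrary graph and let $H$ be an $l$-degenerate graph. If $l\in\{1,2\}$, then $G+_S H$ is $2$-degenerate; if $l\ge 3$, then $G+_S H$ is $l$-degenerate.
   Context: A graph is $k$-degenerate if its vertices can be successively deleted so that each deleted vertex has degree at most $k$ (in the remaining graph) at the time of deletion. The subdivision graph $S(G)$ is obtained from $G$ by inserting one new vertex into each edge (each edge replaced by a path of length 2); its vertex set is identified with $V(G)\cup E(G)$. The $S$-sum $G+_S H$ has vertex set $(V(G)\cup E(G))\times V(H)$, and $(u_1,u_2)$, $(v_1,v_2)$ are adjacent iff either [$u_1=v_1\in V(G)$ and $u_2v_2\in E(H)$] or [$u_2=v_2$ and $u_1v_1\in E(S(G))$]. *)

From mathcomp Require Import all_boot.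
Set Implicit Arguments. Unset Strict Implicit. Unset Printing Implicit Defensive.

Definition simple_graph (T : finType) (e : rel T) : Prop :=
  symmetric e /\ irreflexive e.

(* k-degenerate: there is an ordering s of all vertices (deletion order) such that
   each vertex x, at the time it is deleted, has at most k neighbours among the
   vertices not yet deleted (those after x in s). *)
Definition degenerate (T : finType) (e : rel T) (k : nat) : Prop :=
  exists s : seq T, perm_eq s (enum T) /\
    forall (s1 : seq T) (x : T) (s2 : seq T), s = s1 ++ x :: s2 -> count (e x) s2 <= k.

Definition is_edge (T : finType) (e : rel T) (A : {set T}) : bool :=
  [exists x, exists y, e x y && (A == [set x; y])].

Definition is_SV (T : finType) (e : rel T) (v : T + {set T}) : bool :=
  match v with inl _ => true | inr A => is_edge e A end.

(* Vertex set of the subdivision graph S(G): V(G) ∪ E(G). *)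
Definition SV (T : finType) (e : rel T) : finType := {v : T + {set T} | is_SV e v}.

Definition Sadj0 (T : finType) (v w : T + {set T}) : bool :=
  match v, w with
  | inl x, inr A => x \in A
  | inr A, inl x => x \in A
  | _, _ => false
  end.

Definition Sadj (T : finType) (e : rel T) : rel (SV e) :=
  fun v w => Sadj0 (val v) (val w).

Definition is_vertex (T : finType) (e : rel T) (v : SV e) : bool :=
  if val v is inl _ then true else false.

Definition Ssum_adj (T U : finType) (eG : rel T) (eH : rel U) : rel (SV eG * U) :=
  fun p q =>
    ((p.1 == q.1) && is_vertex p.1 && eH p.2 q.2)
    || ((p.2 == q.2) && Sadj p.1 q.1).
Arguments Ssum_adj {T U} eG eH _ _.
Arguments Sadj {T} e _ _.

From mathcomp Require Import all_boot.
Set Implicit Arguments. Unset Strict Implicit. Unset Printing Implicit Defensive.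

(* Delete the edge-vertices of S(G) first, in all copies of H: such a vertex
   (A, u) is adjacent only to (x, u) and (y, u), where A = {x, y}, so it has at
   most two neighbours.  What remains is a disjoint union of copies of H, one
   fibre {v} x V(H) per vertex v of G, each deleted along a degeneracy order of
   H.  Hence G +_S H is max(2, l)-degenerate. *)

Section DegeneracyOrder.
Variables (V : Type) (e : rel V).

Definition degeneracy_order (k : nat) (s : seq V) : Prop :=
  forall (s1 : seq V) (x : V) (s2 : seq V), s = s1 ++ x :: s2 -> count (e x) s2 <= k.

Lemma degeneracy_order_nil k : degeneracy_order k [::].
Proof. by case. Qed.

Lemma degeneracy_order_cons k y t :
  degeneracy_order k (y :: t) <-> count (e y) t <= k /\ degeneracy_order k t.
Proof.
split=> [ord | [cnt ord] [|z s1] x s2 /= [eq_y eq_t]].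
- split; first exact: (ord [::]).
  by move=> s1 x s2 eq_t; apply: (ord (y :: s1)); rewrite eq_t.
- by rewrite -eq_y -eq_t.
- exact: ord eq_t.
Qed.

Lemma degeneracy_order_leq k k' s :
  k <= k' -> degeneracy_order k s -> degeneracy_order k' s.
Proof. by move=> le_kk' ord s1 x s2 /ord /leq_trans; apply. Qed.

End DegeneracyOrder.

Section SubdivisionSum.
Variables (T U : finType) (eG : rel T) (eH : rel U).

Local Notation adj := (Ssum_adj eG eH).

Lemma Sadj_vertexN (v w : SV eG) : is_vertex v -> Sadj eG v w -> ~~ is_vertex w.
Proof. by case: v w => [[x|A] ?] [[y|B] ?]. Qed.

Lemma Ssum_adj_fibre (v : SV eG) (u u' : U) :
  is_vertex v -> adj (v, u) (v, u') = eH u u'.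
Proof.
move=> v_vert; rewrite /Ssum_adj /= eqxx v_vert /=.
case vv: (Sadj eG v v); last by rewrite andbF orbF.
by move: (Sadj_vertexN v_vert vv); rewrite v_vert.
Qed.

Lemma Ssum_adj_fibresN (v w : SV eG) (u u' : U) :
  is_vertex v -> is_vertex w -> v != w -> ~~ adj (v, u) (w, u').
Proof.
move=> v_vert w_vert /negbTE neq_vw; rewrite /Ssum_adj /= neq_vw /=.
by apply/negP => /andP [_ /(Sadj_vertexN v_vert)]; rewrite w_vert.
Qed.

Lemma count_Ssum_adj_edge (p : SV eG * U) (t : seq (SV eG * U)) :
  ~~ is_vertex p.1 -> uniq t -> count (adj p) t <= 2.
Proof.
case: p => [[[z|A] A_edge] u] //= _ uniq_t.
have /existsP [x /existsP [y /andP [_ /eqP defA]]] := A_edge.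
pose px : SV eG * U := (exist _ (inl x) isT, u).
pose py : SV eG * U := (exist _ (inl y) isT, u).
rewrite -size_filter.
apply: leq_trans (uniq_leq_size (s2 := [:: px; py]) (filter_uniq _ uniq_t) _) _ => //.
move=> [[[w|B] w_SV] u']; rewrite mem_filter /Ssum_adj /Sadj /= ?andbF //=.
case/andP=> [/andP [/eqP <-]]; rewrite defA => /set2P [->|->] _;
  by rewrite !inE (eq_irrelevance w_SV isT) eqxx ?orbT.
Qed.

Lemma degeneracy_order_edges_cat k (a b : seq (SV eG * U)) :
  2 <= k -> all (fun p => ~~ is_vertex p.1) a -> uniq (a ++ b) ->
  degeneracy_order adj k b -> degeneracy_order adj k (a ++ b).
Proof.
move=> le2k; elim: a => [|p a IHa] //= /andP [p_edge a_edges] /andP [_ uniq_ab] ord_b.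
apply/degeneracy_order_cons; split; last exact: IHa.
exact: leq_trans (count_Ssum_adj_edge p_edge uniq_ab) le2k.
Qed.

Lemma degeneracy_order_fibre_cat k (v : SV eG) (sH : seq U) (rest : seq (SV eG * U)) :
  is_vertex v -> degeneracy_order eH k sH ->
  (forall u, count (adj (v, u)) rest = 0) -> degeneracy_order adj k rest ->
  degeneracy_order adj k ([seq (v, u) | u <- sH] ++ rest).
Proof.
move=> v_vert + no_adj_rest ord_rest; elim: sH => [|u sH IHsH] //=.
case/degeneracy_order_cons=> cnt_u ord_sH.
apply/degeneracy_order_cons; split; last exact: IHsH.
rewrite count_cat no_adj_rest addn0 count_map.
by rewrite (eq_count (a2 := eH u)) // => u' /=; rewrite Ssum_adj_fibre.
Qed.

Lemma degeneracy_order_fibres k (sV : seq (SV eG)) (sH : seq U) :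
  degeneracy_order eH k sH -> uniq sV -> all (@is_vertex T eG) sV ->
  degeneracy_order adj k [seq (v, u) | v <- sV, u <- sH].
Proof.
move=> ord_H; elim: sV => [|v sV IHsV] /=; first by move=> *; apply: degeneracy_order_nil.
case/andP=> [v_notin uniq_sV] /andP [v_vert sV_vert].
apply: degeneracy_order_fibre_cat => [//|//|u|]; last exact: IHsV.
apply/eqP; rewrite eqn0Ngt -has_count; apply/hasPn => _ /allpairsP [[w u'] /= [w_in _ ->]].
apply: Ssum_adj_fibresN => //; first exact: (allP sV_vert).
by apply: contraNneq v_notin => ->.
Qed.

Lemma Ssum_degenerate_maxn l :
  degenerate eH l -> degenerate adj (maxn 2 l).
Proof.
move=> [sH [perm_sH ord_sH]].
pose a := [seq p <- enum {: SV eG * U} | ~~ is_vertex p.1].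
pose sV := [seq v <- enum (SV eG) | is_vertex v].
pose b := [seq (v, u) | v <- sV, u <- sH].
have uniq_sV : uniq sV by rewrite filter_uniq ?enum_uniq.
have uniq_b : uniq b.
  apply: allpairs_uniq => //; first by rewrite (perm_uniq perm_sH) enum_uniq.
  by move=> [? ?] [? ?] _ _.
have mem_b q : (q \in b) = is_vertex q.1.
  apply/allpairsP/idP => [[[v u] /= [v_in _ ->]] | q_vert].
    by move: v_in; rewrite mem_filter => /andP [].
  by exists q; rewrite mem_filter q_vert mem_enum (perm_mem perm_sH) mem_enum; case: q q_vert.
have uniq_ab : uniq (a ++ b).
  rewrite cat_uniq filter_uniq ?enum_uniq // uniq_b andbT.
  by apply/hasPn => q; rewrite mem_b mem_filter => ->.
exists (a ++ b); split.
  apply: uniq_perm; rewrite ?enum_uniq // => q.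
  by rewrite mem_enum mem_cat mem_b mem_filter mem_enum andbT orNb.
apply: degeneracy_order_edges_cat; rewrite ?leq_maxl //.
  by apply/allP => q; rewrite mem_filter => /andP [].
apply: degeneracy_order_fibres; rewrite ?filter_all //.
exact: degeneracy_order_leq (leq_maxr 2 l) ord_sH.
Qed.

End SubdivisionSum.

Theorem theorem1 (T U : finType) (eG : rel T) (eH : rel U) (l : nat) :
  0 < l -> simple_graph eG -> simple_graph eH -> degenerate eH l ->
  ((l <= 2 -> degenerate (Ssum_adj eG eH) 2) /\
   (3 <= l -> degenerate (Ssum_adj eG eH) l)).
Proof.
move=> _ _ _ /(Ssum_degenerate_maxn eG) degen; split => [le_l2 | ge_l3].
- by rewrite -(maxn_idPl le_l2).
- by rewrite -(maxn_idPr (ltnW ge_l3)).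
Qed.
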